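(* Let $p\in(0,1)$ and let $G=(V,E)$ be an undirected graph with $n=|V|$, $m=|E|$. Consider the $\ell_p$ QRJA instance $\mathcal I(G)$ constructed from $G$. Then every optimal solution $\mathbf x$ of $\mathcal I(G)$ satisfies, after a global constant shift making $x_{v^{(s)}}=0$: $x_{v^{(t)}}=1$ and $x_u\in\{0,1\}$ for every $u\in V$.
   Context: An $\ell_p$ QRJA instance consists of candidates, judgments $(a,b,y)$ (''$a$ is better than $b$ by $y$'') with nonnegative weights, and a solution $\mathbf x$ assigns a real number $x_a$ to each candidate $a$; its loss is $\sum w\,|x_a-x_b-y|^p$ summed over the weighted judgments $(a,b,y)$ with weight $w$; optimal solutions minimize the loss (the loss is invariant under adding a common constant to all coordinates). Construction of $\mathcal I(G)$: let $w_2=\frac{2n}{1-p}+1$ and $w_1=nw_2+1$. The candidates are $V\cup\{v^{(s)},v^{(t)}\}$ (two new candidates). The judgments are: $(v^{(t)},v^{(s)},1)$ with weight $w_1$; $(v^{(s)},u,0)$ with weight $w_2$ for each $u\in V$; $(v^{(t)},u,0)$ with weight $w_2$ for each $u\in V$; and both $(u,v,1)$ and $(v,u,1)$ with weight $1$ for each edge $\{u,v\}\in E$. *)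

From mathcomp Require Import all_boot all_order all_algebra.
From mathcomp Require Import all_classical all_reals all_analysis.
Set Implicit Arguments. Unset Strict Implicit. Unset Printing Implicit Defensive.
Import Order.TTheory GRing.Theory Num.Theory.
Local Open Scope ring_scope.

(* A weighted judgment (a, b, y) with weight w : "a is better than b by y". *)
Record judgment (R : realType) (C : Type) := Judgment {
  j_a : C; j_b : C; j_y : R; j_w : R }.

Definition qrja_loss (R : realType) (C : Type) (p : R)
    (J : seq (judgment R C)) (x : C -> R) : R :=
  \sum_(j <- J) j_w j * (`| x (j_a j) - x (j_b j) - j_y j | `^ p).

Definition qrja_optimal (R : realType) (C : Type) (p : R)
    (J : seq (judgment R C)) (x : C -> R) : Prop :=
  forall x' : C -> R, qrja_loss p J x <= qrja_loss p J x'.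

Inductive cand (V : Type) := Vs | Vt | Vert of V.
Arguments Vs {V}. Arguments Vt {V}.

(* A simple undirected graph on a finite vertex type V is given by a symmetric
   irreflexive relation e; each edge {u,v} appears as both (u,v) and (v,u). *)
Definition w2_of (R : realType) (V : finType) (p : R) : R :=
  2 * #|V|%:R / (1 - p) + 1.
Definition w1_of (R : realType) (V : finType) (p : R) : R :=
  #|V|%:R * w2_of V p + 1.

Definition instI (R : realType) (V : finType) (e : rel V) (p : R)
    : seq (judgment R (cand V)) :=
  [:: Judgment Vt Vs 1 (w1_of V p)]
  ++ [seq Judgment Vs (Vert u) 0 (w2_of V p) | u <- enum V]
  ++ [seq Judgment Vt (Vert u) 0 (w2_of V p) | u <- enum V]
  ++ [seq Judgment (Vert uv.1) (Vert uv.2) 1 1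
        | uv <- enum [pred uv : V * V | e uv.1 uv.2]].

(* Subadditivity of t |-> |t|^p for 0 < p <= 1 drives both steps.  If
   d = |x_t - x_s - 1|^p > 0, moving v^(t) to x_s + 1 saves w1 d on the judgment
   (v^(t), v^(s), 1) and costs at most n w2 d on the judgments (v^(t), u, 0);
   since w1 > n w2 this contradicts optimality.  Next, a vertex u at offset
   c = x_u - x_s outside {0, 1} can be snapped to the nearer of 0 and 1: this
   lowers its two anchoring terms w2 (|c|^p + |1 - c|^p) to w2 and raises the
   edge terms by at most 2 n |c - c'|^p, a net gain because of the estimate
   p c^p + (1 - c)^p >= 1 for 0 < c <= 1/2 and the size of w2. *)

From mathcomp Require Import all_boot all_order all_algebra.
From mathcomp Require Import all_classical all_reals all_analysis.
From mathcomp Require Import ring lra.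
Import Order.TTheory GRing.Theory Num.Theory.
Set Implicit Arguments. Unset Strict Implicit. Unset Printing Implicit Defensive.
Local Open Scope ring_scope.

Section PowRInequalities.
Variable R : realType.

Lemma powR_subadd (p a b : R) : 0 < p -> p <= 1 -> 0 <= a -> 0 <= b ->
  (a + b) `^ p <= a `^ p + b `^ p.
Proof.
move=> p0 p1 a0 b0.
have [ab0|ab0] := eqVneq (a + b) 0.
  have -> : a = 0 by lra.
  have -> : b = 0 by lra.
  by rewrite addr0 powR0 ?gt_eqF // addr0.
set s := a + b; have s0 : 0 < s by rewrite /s; lra.
(* each summand t satisfies t / s <= (t / s) ^ p since t / s lies in [0, 1] *)
have part t : 0 <= t <= s -> t / s * s `^ p <= t `^ p.
  case/andP=> t0 ts; have [->|tn0] := eqVneq t 0; first by rewrite !mul0r powR_ge0.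
  rewrite -{2}(divfK (lt0r_neq0 s0) t) powRM ?divr_ge0 ?(ltW s0) //.
  rewrite ler_wpM2r ?powR_ge0 //.
  by apply: ger1_powR p1; rewrite divr_gt0 ?ler_pdivrMr ?mul1r //=; lra.
have <- : a / s * s `^ p + b / s * s `^ p = s `^ p.
  by rewrite -mulrDl -mulrDl divff ?mul1r ?gt_eqF.
by apply: lerD; apply: part; rewrite /s; apply/andP; split; lra.
Qed.

Lemma powR_norm_subadd (p y z : R) : 0 < p -> p <= 1 ->
  `|y + z| `^ p <= `|y| `^ p + `|z| `^ p.
Proof.
move=> p0 p1; apply: le_trans _ (powR_subadd p0 p1 (normr_ge0 y) (normr_ge0 z)).
apply: ge0_ler_powR; rewrite ?nnegrE ?addr_ge0 ?ler_normD //; exact: ltW.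
Qed.

Lemma powR_normB_le (p a b : R) : 0 < p -> p <= 1 ->
  `|a| `^ p <= `|b| `^ p + `|a - b| `^ p.
Proof. by move=> p0 p1; rewrite -{1}(subrKC b a) powR_norm_subadd. Qed.

Lemma powR1D_le (p a : R) : 0 <= p -> p <= 1 -> -1 < a ->
  (1 + a) `^ p <= 1 + p * a.
Proof.
move=> p0 p1 a1; have a10 : 0 < 1 + a by lra.
set L := ln (1 + a).
have E : (1 + a) `^ p = expR (p * L) by rewrite /powR gt_eqF.
(* tangent-line bounds for expR at -p L and (1 - p) L, averaged with weights 1 - p and p *)
have q0 : 0 <= 1 - p by lra.
have h1 := ler_wpM2l q0 (expR_ge1Dx (- (p * L))).
have h2 := ler_wpM2l p0 (expR_ge1Dx ((1 - p) * L)).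
have h : 1 <= (1 - p) * expR (- (p * L)) + p * expR ((1 - p) * L).
  have : (1 - p) * (1 + - (p * L)) + p * (1 + (1 - p) * L) = 1 by ring.
  lra.
have := ler_wpM2r (powR_ge0 (1 + a) p) h.
rewrite mul1r mulrDl -!mulrA E -!expRD addNr expR0 -mulrDl subrK mul1r /L lnK ?posrE //.
lra.
Qed.

Lemma powR_complement_ge1 (p c : R) : 0 < p -> p <= 1 -> 0 < c -> c <= 1 / 2 ->
  1 <= p * c `^ p + (1 - c) `^ p.
Proof.
move=> p0 p1 c0 c2; have c1 : 0 < 1 - c by lra.
set a := c / (1 - c).
have a0 : 0 < a by rewrite divr_gt0.
have a1 : a <= 1 by rewrite ler_pdivrMr // mul1r; lra.
have e1 : (1 - c) * (1 + a) = 1 by rewrite mulrDr mulr1 mulrCA divff ?gt_eqF // mulr1; ring.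
have e2 : (1 - c) * a = c by rewrite mulrCA divff ?gt_eqF // mulr1.
have h : (1 + a) `^ p <= 1 + p * a `^ p.
  apply: le_trans (powR1D_le (ltW p0) p1 _) _; first lra.
  by rewrite lerD2l ler_pM2l //; apply: ger1_powR; rewrite ?a0.
have q1 : (1 - c) `^ p * (1 + a) `^ p = 1 by rewrite -powRM ?e1 ?powR1 //; lra.
have q2 : (1 - c) `^ p * a `^ p = c `^ p by rewrite -powRM ?e2 //; lra.
have := ler_wpM2l (powR_ge0 (1 - c) p) h.
rewrite q1 mulrDr mulr1 mulrCA q2; lra.
Qed.

Lemma snap_to_0_gain (p N c : R) : 0 < p -> p < 1 -> 0 <= N -> c != 0 -> c <= 1 / 2 ->
  (2 * N / (1 - p) + 1) + 2 * N * `|c| `^ p <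
  (2 * N / (1 - p) + 1) * (`|c| `^ p + `|1 - c| `^ p).
Proof.
move=> p0 p1 N0 c0 c2; set W := 2 * N / (1 - p) + 1.
have q0 : 0 < 1 - p by lra.
have WE : W * (1 - p) = 2 * N + (1 - p) by rewrite mulrDl mul1r divfK ?gt_eqF.
have D0 : 0 <= 2 * N / (1 - p) by rewrite divr_ge0 ?mulr_ge0 // ltW.
have W0 : 0 < W by rewrite /W; lra.
have cp0 : 0 < `|c| `^ p by rewrite powR_gt0 ?normr_gt0.
have [cneg|cpos] := ltP c 0.
  have W2N : 2 * N < W.
    have : 2 * N <= 2 * N / (1 - p) by rewrite ler_pdivlMr //; nra.
    rewrite /W; lra.
  have : 1 `^ p <= `|1 - c| `^ p.
    rewrite ger0_norm; last lra.
    by apply: ge0_ler_powR; rewrite ?nnegrE; lra.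
  rewrite powR1 => /(ler_wpM2l (ltW W0)); rewrite mulr1 => h1.
  have : 2 * N * `|c| `^ p < W * `|c| `^ p by rewrite ltr_pM2r.
  rewrite mulrDr; lra.
have {}c0 : 0 < c by rewrite lt_neqAle eq_sym c0.
rewrite ger0_norm ?ltW // ger0_norm; last lra.
have := powR_complement_ge1 p0 (ltW p1) c0 c2.
move=> /(ler_wpM2l (ltW W0)).
have -> : W * (p * c `^ p + (1 - c) `^ p) =
          W * (1 - c) `^ p - W * (1 - p) * c `^ p + W * c `^ p by ring.
rewrite WE => h; have := mulr_gt0 q0 (powR_gt0 p c0); rewrite mulrDr; lra.
Qed.

Lemma exists_snap (p N c : R) : 0 < p -> p < 1 -> 0 <= N -> c != 0 -> c != 1 ->
  exists2 c', `|c'| `^ p + `|1 - c'| `^ p = 1 &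
    (2 * N / (1 - p) + 1) + 2 * N * `|c - c'| `^ p <
    (2 * N / (1 - p) + 1) * (`|c| `^ p + `|1 - c| `^ p).
Proof.
move=> p0 p1 N0 c0 c1; have p00 : (0 : R) `^ p = 0 by rewrite powR0 ?gt_eqF.
have [c2|c2] := leP c (1 / 2).
  exists 0; first by rewrite subr0 normr0 normr1 p00 powR1 add0r.
  by rewrite subr0 snap_to_0_gain.
exists 1; first by rewrite subrr normr0 normr1 p00 powR1 addr0.
have c'2 : 1 - c <= 1 / 2 by lra.
have c'0 : 1 - c != 0 by rewrite subr_eq0 eq_sym.
have := snap_to_0_gain p0 p1 N0 c'0 c'2.
by rewrite opprB subrKC distrC [`|c| `^ p + _]addrC.
Qed.

End PowRInequalities.

Section FiniteSums.
Variable R : realType.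

Lemma sum_pairs_addE (V : finType) (h : V -> R) :
  \sum_(ab : V * V) (h ab.1 + h ab.2) = 2 * #|V|%:R * \sum_v h v.
Proof.
rewrite -(pair_bigA _ (fun a b => h a + h b)) /=.
under eq_bigr do rewrite big_split /= sumr_const.
by rewrite big_split /= sumr_const sumrMnl -mulr2n -mulrnA mulrC -natrM mulr_natr mulnC.
Qed.

Lemma pair_loss_perturb (V : finType) (P : pred (V * V)) (p y : R) (f g : V -> R) :
  0 < p -> p <= 1 ->
  \sum_(ab | P ab) `|g ab.1 - g ab.2 - y| `^ p <=
  \sum_(ab | P ab) `|f ab.1 - f ab.2 - y| `^ p
    + 2 * #|V|%:R * \sum_v `|g v - f v| `^ p.
Proof.
move=> p0 p1; rewrite -sum_pairs_addE (bigID P predT) /= addrA -big_split /=.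
rewrite -[X in X <= _]addr0; apply: lerD.
  2: by apply: sumr_ge0 => ab _; rewrite addr_ge0 ?powR_ge0.
apply: ler_sum => ab _.
apply: le_trans (powR_normB_le _ (f ab.1 - f ab.2 - y) p0 p1) _; rewrite lerD2l.
have -> : g ab.1 - g ab.2 - y - (f ab.1 - f ab.2 - y) =
          (g ab.1 - f ab.1) + - (g ab.2 - f ab.2) by ring.
by rewrite -(normrN (g ab.2 - f ab.2)) powR_norm_subadd.
Qed.

Lemma sum_update1 (V : finType) (u0 : V) (F G : V -> R) :
  (forall v, v != u0 -> G v = F v) -> \sum_v G v = \sum_v F v - F u0 + G u0.
Proof.
move=> GF; rewrite [LHS](bigD1 u0) // [in RHS](bigD1 u0) //= (eq_bigr _ (fun v => GF v)).
lra.
Qed.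

End FiniteSums.

Section QRJAInstance.
Variables (R : realType) (V : finType) (e : rel V) (p : R).
Hypotheses (hp0 : 0 < p) (hp1 : p < 1).

Lemma qrja_loss_instI (x : cand V -> R) :
  qrja_loss p (instI e p) x =
    w1_of V p * `|x Vt - x Vs - 1| `^ p
  + \sum_u w2_of V p * `|x Vs - x (Vert u)| `^ p
  + \sum_u w2_of V p * `|x Vt - x (Vert u)| `^ p
  + \sum_(ab : V * V | e ab.1 ab.2) `|x (Vert ab.1) - x (Vert ab.2) - 1| `^ p.
Proof.
rewrite /qrja_loss /instI big_cons !big_cat /= !big_map !big_enum /= !addrA.
by congr (_ + _ + _ + _); apply: eq_bigr => *; rewrite ?subr0 ?mul1r.
Qed.

Lemma w2_gt0 : 0 < w2_of V p.
Proof.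
have : 0 <= 2 * #|V|%:R / (1 - p) by rewrite divr_ge0 ?mulr_ge0 // subr_ge0 ltW.
rewrite /w2_of; lra.
Qed.

Lemma optimal_gap (x : cand V -> R) :
  qrja_optimal p (instI e p) x -> x Vt - x Vs = 1.
Proof.
move=> hopt; pose x' k := if k is Vt then x Vs + 1 else x k.
have := hopt x'; rewrite !qrja_loss_instI /=.
have -> : x Vs + 1 - x Vs - 1 = 0 by ring.
rewrite normr0 powR0 ?gt_eqF // mulr0 add0r.
set d := `|x Vt - x Vs - 1| `^ p; set w2 := w2_of V p.
have ht : \sum_u w2 * `|x Vs + 1 - x (Vert u)| `^ p <=
          \sum_u w2 * `|x Vt - x (Vert u)| `^ p + #|V|%:R * (w2 * d).
  have -> : #|V|%:R * (w2 * d) = \sum_(u : V) w2 * d by rewrite sumr_const mulr_natl.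
  rewrite -big_split /=; apply: ler_sum => u _; rewrite -mulrDr ler_pM2l ?w2_gt0 //.
  have := powR_normB_le (x Vs + 1 - x (Vert u)) (x Vt - x (Vert u)) hp0 (ltW hp1).
  have -> : x Vs + 1 - x (Vert u) - (x Vt - x (Vert u)) = - (x Vt - x Vs - 1) by ring.
  by rewrite normrN.
have w1E : w1_of V p = #|V|%:R * w2 + 1 by [].
have d0 : 0 <= d := powR_ge0 _ _.
move=> hle; have : d = 0 by rewrite w1E in hle; lra.
by move=> /powR_eq0_eq0/normr0_eq0/subr0_eq.
Qed.

Lemma optimal_vertex_bound (x : cand V -> R) (u0 : V) (c c' : R) :
  qrja_optimal p (instI e p) x -> x Vt - x Vs = 1 -> x (Vert u0) - x Vs = c ->
  w2_of V p * (`|c| `^ p + `|1 - c| `^ p) <=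
  w2_of V p * (`|c'| `^ p + `|1 - c'| `^ p) + 2 * #|V|%:R * `|c - c'| `^ p.
Proof.
move=> hopt hgap hc.
pose x' k := if k is Vert v then (if v == u0 then x Vs + c' else x k) else x k.
have moved (F : R -> R) :
    \sum_u F (x' (Vert u)) = \sum_u F (x (Vert u)) - F (x Vs + c) + F (x Vs + c').
  rewrite (sum_update1 (u0 := u0) (F := fun u => F (x (Vert u)))) /x' ?eqxx -?hc ?subrKC //.
  by move=> v /negbTE ->.
have shift : \sum_v `|x' (Vert v) - x (Vert v)| `^ p = `|c - c'| `^ p.
  rewrite (sum_update1 (u0 := u0) (F := fun => 0)) => [|v /= /negbTE ->].
    by rewrite big1_eq subrr add0r /= eqxx -hc distrC; congr (`|_| `^ p); ring.
  by rewrite subrr normr0 powR0 ?gt_eqF.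
have := pair_loss_perturb (fun ab => e ab.1 ab.2) 1
  (fun v => x (Vert v)) (fun v => x' (Vert v)) hp0 (ltW hp1); rewrite shift.
have := hopt x'; rewrite !qrja_loss_instI.
rewrite (moved (fun a => w2_of V p * `|x' Vs - a| `^ p)).
rewrite (moved (fun a => w2_of V p * `|x' Vt - a| `^ p)) /=.
have xt : x Vt = x Vs + 1 by rewrite -hgap subrKC.
have dS a : `|x Vs - (x Vs + a)| = `|a| by rewrite -normrN; congr `|_|; ring.
have dT a : `|x Vs + 1 - (x Vs + a)| = `|1 - a| by congr `|_|; ring.
rewrite xt !dS !dT !mulrDr; lra.
Qed.

End QRJAInstance.

Theorem mainTheorem6 (R : realType) (p : R) (V : finType) (e : rel V)
    (hp0 : 0 < p) (hp1 : p < 1)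
    (esym : symmetric e) (eirr : irreflexive e)
    (x : cand V -> R) (hopt : qrja_optimal p (instI e p) x) :
  x Vt - x Vs = 1 /\
  forall u : V, x (Vert u) - x Vs = 0 \/ x (Vert u) - x Vs = 1.
Proof.
have hgap := optimal_gap hp0 hp1 hopt.
split=> // u; set c := x (Vert u) - x Vs.
have [c0|c0] := eqVneq c 0; first by left.
have [c1|c1] := eqVneq c 1; first by right.
have [c' hc' gain] := exists_snap hp0 hp1 (ler0n _ #|V|) c0 c1.
have := optimal_vertex_bound hp0 hp1 c' hopt hgap (erefl c).
by rewrite hc' mulr1 /w2_of; lra.
Qed.
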